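(* Let $n > 0$ and $i_n = 2|W_{n-1}| + 1$. Then $$d_0(W,\sigma^{i_n} W) = \frac16 + \frac{1}{2\cdot 3^n} \qquad\text{and}\qquad d(W,\sigma^{i_n}W) = \frac29 + \frac{2}{3^{n+1}}.$$ In particular the bound $\frac29$ in $d(W,\sigma^iW)>\frac29$ (for all $i>0$) cannot be improved.
   Context: Words are finite strings over $\{0,1\}$; $\alpha(i)$ is the $i$-th letter and $|\alpha|$ the length. Define $W_0 = 0$, $W_{m+1} = W_m W_m 1 W_m$, and let $W=W(0)W(1)\cdots$ (indexed from $0$) be the unique infinite word having every $W_m$ as an initial segment. For words $\alpha,\beta$ of equal length, $d(\alpha,\beta) = |\{i:\alpha(i)\ne\beta(i)\}|/|\alpha|$, and (if $\alpha$ contains a $0$) $d_0(\alpha,\beta) = |\{i : \alpha(i)=0,\ \beta(i)=1\}|/|\{i:\alpha(i)=0\}|$. For $i>0$ and $m\ge0$ let $\alpha_m$ be the subword of $W$ of length $|W_m|$ starting at position $i$, and set $d(W,\sigma^iW) = \lim_{m\to\infty} d(W_m,\alpha_m)$ and $d_0(W,\sigma^iW) = \lim_{m\to\infty} d_0(W_m,\alpha_m)$. *)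

(* words over {0,1} are lists of bool (false = 0, true = 1). *)
From Stdlib Require Import Reals List Arith.
Import ListNotations.
Open Scope R_scope.

Fixpoint Wm (m : nat) : list bool :=
  match m with
  | O => [false]
  | S k => Wm k ++ Wm k ++ [true] ++ Wm k
  end.

(* The infinite word W: its k-th letter (indexed from 0) is the k-th letter
   of W_k, which has length > k; every W_m is an initial segment of it. *)
Definition Wlet (k : nat) : bool := nth k (Wm k) false.

Definition alpha (i m : nat) : list bool := map Wlet (seq i (length (Wm m))).

Definition mismatches (a b : list bool) : nat :=
  length (filter (fun p : bool * bool => negb (Bool.eqb (fst p) (snd p))) (combine a b)).

Definition zero_one (a b : list bool) : nat :=
  length (filter (fun p : bool * bool => andb (negb (fst p)) (snd p)) (combine a b)).

Definition zeros (a : list bool) : nat := length (filter negb a).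

Definition dist (a b : list bool) : R := INR (mismatches a b) / INR (length a).
Definition dist0 (a b : list bool) : R := INR (zero_one a b) / INR (zeros a).

(* the sequences whose limits define d(W, sigma^i W) and d_0(W, sigma^i W) *)
Definition dseq (i : nat) : nat -> R := fun m => dist (Wm m) (alpha i m).
Definition d0seq (i : nat) : nat -> R := fun m => dist0 (Wm m) (alpha i m).

From Pilot Require Import Defs.
From Stdlib Require Import Reals List Arith Lia Lra.
Import ListNotations.
Open Scope R_scope.

(* Let j = n - 1 and P = W_j W_j, so that i_n = |P 1| = 3^n.  Since W_{m+1} begins with
   W_m W_m, shifting W by i_n turns every W_m = P 1 Q (m > j) into its rotation Q P 1.
   Comparing W_m with Q P 1 and with Q 1 P block-wise along W_{m+1} = W_m W_m 1 W_m
   triples both mismatch counts at each step, starting from the 3^j + 1 letter changes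
   along 1 W_j 1.  So W_{n+k} has 3^k (3^j + 1) mismatches among its (3^{n+k+1} - 1)/2
   letters; half of them are 0/1 positions because a rotation keeps the number of ones,
   and W_{n+k} has 3^{n+k} zeros. *)

Lemma map_nth_seq_middle {T : Type} (d : T) (A B C : list T) :
  map (fun k => nth k (A ++ B ++ C) d) (seq (length A) (length B)) = B.
Proof.
  revert A; induction B as [|b B IH]; intros A; [reflexivity|].
  simpl; f_equal.
  - apply nth_middle.
  - specialize (IH (A ++ [b])).
    rewrite length_app, <- app_assoc, Nat.add_1_r in IH; exact IH.
Qed.

Lemma combine_app {A B : Type} (a1 a2 : list A) (b1 b2 : list B) :
  length a1 = length b1 ->
  combine (a1 ++ a2) (b1 ++ b2) = combine a1 b1 ++ combine a2 b2.
Proof.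
  revert b1; induction a1 as [|x a1 IH]; intros [|y b1] Hlen;
    try discriminate; simpl; [reflexivity|].
  rewrite IH; auto.
Qed.

Lemma mismatches_app a1 a2 b1 b2 : length a1 = length b1 ->
  mismatches (a1 ++ a2) (b1 ++ b2) = (mismatches a1 b1 + mismatches a2 b2)%nat.
Proof. intros Hlen; unfold mismatches; rewrite combine_app, filter_app, length_app; auto. Qed.

Lemma mismatches_cons x y a b :
  mismatches (x :: a) (y :: b) = ((if Bool.eqb x y then 0 else 1) + mismatches a b)%nat.
Proof. unfold mismatches; destruct x, y; reflexivity. Qed.

Lemma mismatches_refl a : mismatches a a = 0%nat.
Proof.
  induction a as [|x a IH]; [reflexivity|].
  rewrite mismatches_cons, IH; destruct x; reflexivity.
Qed.

Lemma mismatches_sym a b : mismatches a b = mismatches b a.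
Proof.
  revert b; induction a as [|x a IH]; intros [|y b]; try reflexivity.
  rewrite !mismatches_cons, IH; destruct x, y; reflexivity.
Qed.

Definition ones (a : list bool) : nat := length (filter (fun x : bool => x) a).

Lemma ones_app a b : ones (a ++ b) = (ones a + ones b)%nat.
Proof. unfold ones; rewrite filter_app, length_app; reflexivity. Qed.

Lemma zeros_app a b : zeros (a ++ b) = (zeros a + zeros b)%nat.
Proof. unfold zeros; rewrite filter_app, length_app; reflexivity. Qed.

(* Mismatches split into 0/1 and 1/0 positions, equally many when the ones are equally many. *)
Lemma zero_one_balanced a b : length a = length b -> ones a = ones b ->
  (2 * zero_one a b = mismatches a b)%nat.
Proof.
  intros Hlen Hones.
  enough (mismatches a b = (zero_one a b + zero_one b a)%nat /\
          (zero_one a b + ones a = zero_one b a + ones b)%nat) by lia.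
  clear Hones; revert b Hlen.
  induction a as [|x a IH]; intros [|y b] Hlen; try discriminate; [split; reflexivity|].
  injection Hlen as Hlen; destruct (IH b Hlen) as [IH1 IH2].
  rewrite mismatches_cons, IH1; unfold zero_one, ones in *; simpl.
  destruct x, y; simpl; lia.
Qed.

(* [flips x w y] is the number of letter changes along the word [x w y]. *)
Definition flips (x : bool) (w : list bool) (y : bool) : nat := mismatches (x :: w) (w ++ [y]).

Lemma flips_nil x y : flips x [] y = if Bool.eqb x y then 0%nat else 1%nat.
Proof. destruct x, y; reflexivity. Qed.

Lemma flips_cons x a w y :
  flips x (a :: w) y = ((if Bool.eqb x a then 0 else 1) + flips a w y)%nat.
Proof. unfold flips; simpl; rewrite mismatches_cons; reflexivity. Qed.

Lemma flips_app x u a v y : flips x (u ++ a :: v) y = (flips x u a + flips a v y)%nat.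
Proof.
  revert x; induction u as [|b u IH]; intros x; simpl.
  - rewrite flips_cons, flips_nil; reflexivity.
  - rewrite !flips_cons, IH; lia.
Qed.

(* Cut [C C 1 C] against [Q C 1 C P 1] (resp. [Q C 1 C 1 P]) into blocks of length [|C|]:
   the second blocks are [Q P 1], [Q 1 P], [1] and [Q P 1] (resp. [Q 1 P]). *)
Lemma mismatches_rotation_step (P Q C : list bool) (c : nat) :
  C = P ++ true :: Q ->
  mismatches C (Q ++ P ++ [true]) = c ->
  mismatches C (Q ++ true :: P) = c ->
  mismatches (C ++ C ++ true :: C) ((Q ++ C ++ true :: C) ++ P ++ [true]) = (3 * c)%nat /\
  mismatches (C ++ C ++ true :: C) ((Q ++ C ++ true :: C) ++ true :: P) = (3 * c)%nat.
Proof.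
  intros HC H1 H2.
  assert (L1 : length C = length (Q ++ P ++ [true]))
    by (rewrite HC, !length_app; simpl; lia).
  assert (L2 : length C = length (Q ++ true :: P))
    by (rewrite HC, !length_app; simpl; lia).
  replace ((Q ++ C ++ true :: C) ++ P ++ [true]) with
    ((Q ++ P ++ [true]) ++ (Q ++ true :: P) ++ [true] ++ (Q ++ P ++ [true]))
    by (rewrite HC; repeat (rewrite <- app_assoc; simpl); reflexivity).
  replace ((Q ++ C ++ true :: C) ++ true :: P) with
    ((Q ++ P ++ [true]) ++ (Q ++ true :: P) ++ [true] ++ (Q ++ true :: P))
    by (rewrite HC; repeat (rewrite <- app_assoc; simpl); reflexivity).
  change (true :: C) with ([true] ++ C).
  rewrite !mismatches_app by auto.
  rewrite H1, H2, mismatches_refl; split; lia.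
Qed.

Lemma length_Wm_S m : length (Wm (S m)) = (3 * length (Wm m) + 1)%nat.
Proof. simpl; rewrite !length_app; simpl; lia. Qed.

Lemma length_Wm m : (2 * length (Wm m) + 1 = 3 ^ S m)%nat.
Proof.
  induction m as [|m IH]; [reflexivity|].
  rewrite length_Wm_S, Nat.pow_succ_r'; lia.
Qed.

Lemma zeros_Wm m : zeros (Wm m) = (3 ^ m)%nat.
Proof.
  induction m as [|m IH]; [reflexivity|].
  simpl Wm; rewrite !zeros_app.
  change (zeros (true :: Wm m)) with (zeros (Wm m)).
  rewrite IH, Nat.pow_succ_r'; lia.
Qed.

Lemma Wm_head m : exists E, Wm m = false :: E.
Proof.
  induction m as [|m [E HE]]; [eexists; reflexivity|].
  simpl; rewrite HE; eexists; reflexivity.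
Qed.

Lemma Wm_prefix m c : exists r, Wm (m + c) = Wm m ++ r.
Proof.
  induction c as [|c [r Hr]].
  - exists []; rewrite Nat.add_0_r, app_nil_r; reflexivity.
  - rewrite Nat.add_succ_r; simpl; rewrite Hr.
    eexists; rewrite <- app_assoc; reflexivity.
Qed.

Lemma Wlet_nth k M : (k < length (Wm M))%nat -> Wlet k = nth k (Wm M) false.
Proof.
  assert (Hlong : forall m, (m < length (Wm m))%nat).
  { induction m as [|m IH]; [simpl; lia|]. rewrite length_Wm_S; lia. }
  intros Hk; unfold Wlet.
  destruct (le_lt_dec k M) as [HkM|HMk].
  - destruct (Wm_prefix k (M - k)) as [r Hr].
    replace (k + (M - k))%nat with M in Hr by lia.
    rewrite Hr, app_nth1; auto.
  - destruct (Wm_prefix M (k - M)) as [r Hr].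
    replace (M + (k - M))%nat with k in Hr by lia.
    rewrite Hr, app_nth1; auto.
Qed.

(* [W_{m+1}] begins with [X Y X Y], so the window of [W] at offset [|X|] is [Y X]. *)
Lemma alpha_rotate m X Y : Wm m = X ++ Y -> alpha (length X) m = Y ++ X.
Proof.
  intros HW.
  assert (HS : Wm (S m) = X ++ (Y ++ X) ++ (Y ++ true :: Wm m))
    by (simpl; rewrite HW, <- !app_assoc; reflexivity).
  unfold alpha.
  rewrite (map_ext_in _ (fun k => nth k (Wm (S m)) false)).
  - replace (length (Wm m)) with (length (Y ++ X))
      by (rewrite HW, !length_app; lia).
    rewrite HS; apply map_nth_seq_middle.
  - intros k Hk; apply in_seq in Hk; apply Wlet_nth.
    rewrite HS, !length_app; simpl; lia.
Qed.

Lemma flips_Wm x y j :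
  (flips x (Wm j) y + 1 = 3 ^ j + Nat.b2n x + Nat.b2n y)%nat.
Proof.
  revert x y; induction j as [|j IH]; intros x y.
  - destruct x, y; reflexivity.
  - destruct (Wm_head j) as [E HE].
    simpl Wm.
    replace (Wm j ++ Wm j ++ true :: Wm j) with (Wm j ++ false :: (E ++ true :: Wm j))
      by (rewrite HE; reflexivity).
    rewrite !flips_app.
    replace (flips false E true) with (flips false (Wm j) true)
      by (rewrite HE, flips_cons; reflexivity).
    pose proof (IH x false); pose proof (IH false true); pose proof (IH true y).
    rewrite Nat.pow_succ_r'; simpl Nat.b2n in *; lia.
Qed.

Lemma Wm_rotation_mismatches j k : exists Q,
  Wm (S j + k) = (Wm j ++ Wm j) ++ true :: Q /\
  mismatches (Wm (S j + k)) (Q ++ (Wm j ++ Wm j) ++ [true]) = (3 ^ k * (3 ^ j + 1))%nat /\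
  mismatches (Wm (S j + k)) (Q ++ true :: Wm j ++ Wm j) = (3 ^ k * (3 ^ j + 1))%nat.
Proof.
  induction k as [|k [Q [HC [H1 H2]]]].
  - exists (Wm j); rewrite Nat.add_0_r, Nat.pow_0_r, Nat.mul_1_l.
    pose proof (flips_Wm true true j) as Hflips; simpl Nat.b2n in Hflips.
    simpl Wm; rewrite <- !app_assoc; split; [reflexivity|split].
    + rewrite !mismatches_app, !mismatches_refl by reflexivity.
      change (mismatches (true :: Wm j) (Wm j ++ [true])) with (flips true (Wm j) true); lia.
    + rewrite mismatches_app, mismatches_refl by reflexivity.
      replace (Wm j ++ true :: Wm j) with ((Wm j ++ [true]) ++ Wm j)
        by (rewrite <- app_assoc; reflexivity).
      change (true :: Wm j ++ Wm j) with ((true :: Wm j) ++ Wm j).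
      rewrite mismatches_app, mismatches_refl, mismatches_sym
        by (rewrite length_app; simpl; lia).
      change (mismatches (true :: Wm j) (Wm j ++ [true])) with (flips true (Wm j) true); lia.
  - exists (Q ++ Wm (S j + k) ++ true :: Wm (S j + k)).
    rewrite Nat.add_succ_r, Nat.pow_succ_r', <- Nat.mul_assoc.
    change (Wm (S (S j + k))) with (Wm (S j + k) ++ Wm (S j + k) ++ [true] ++ Wm (S j + k)).
    split.
    + rewrite HC at 1; rewrite <- !app_assoc; reflexivity.
    + exact (mismatches_rotation_step _ _ _ _ HC H1 H2).
Qed.

Lemma alpha_Wm_shift j k Q :
  Wm (S j + k) = (Wm j ++ Wm j) ++ true :: Q ->
  alpha (3 ^ S j) (S j + k) = Q ++ (Wm j ++ Wm j) ++ [true].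
Proof.
  intros HC.
  rewrite <- (length_Wm j).
  replace (2 * length (Wm j) + 1)%nat with (length ((Wm j ++ Wm j) ++ [true]))
    by (rewrite !length_app; simpl; lia).
  apply alpha_rotate; rewrite HC, <- !app_assoc; reflexivity.
Qed.

Lemma mismatches_Wm_shift j k :
  mismatches (Wm (S j + k)) (alpha (3 ^ S j) (S j + k)) = (3 ^ k * (3 ^ j + 1))%nat.
Proof.
  destruct (Wm_rotation_mismatches j k) as [Q [HC [H1 _]]].
  rewrite (alpha_Wm_shift _ _ _ HC); exact H1.
Qed.

Lemma zero_one_Wm_shift j k :
  (2 * zero_one (Wm (S j + k)) (alpha (3 ^ S j) (S j + k)) = 3 ^ k * (3 ^ j + 1))%nat.
Proof.
  rewrite <- mismatches_Wm_shift.
  destruct (Wm_rotation_mismatches j k) as [Q [HC _]].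
  rewrite (alpha_Wm_shift _ _ _ HC), HC.
  apply zero_one_balanced.
  - rewrite !length_app; simpl; lia.
  - change (true :: Q) with ([true] ++ Q); rewrite !ones_app; lia.
Qed.

Lemma Un_cv_const u c : (forall k, u k = c) -> Un_cv u c.
Proof.
  intros Hu eps Heps; exists 0%nat; intros k _.
  unfold R_dist; rewrite Hu, Rminus_diag, Rabs_R0; exact Heps.
Qed.

Lemma Un_cv_dominated u v l :
  (forall k, Rabs (u k - l) <= v k) -> Un_cv v 0 -> Un_cv u l.
Proof.
  intros Hdom Hv eps Heps; destruct (Hv eps Heps) as [N HN].
  exists N; intros k Hk; unfold R_dist.
  apply Rle_lt_trans with (1 := Hdom k).
  specialize (HN k Hk); unfold R_dist in HN; rewrite Rminus_0_r in HN.
  apply Rle_lt_trans with (2 := HN), RRle_abs.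
Qed.

Lemma Un_cv_inv_pow3 : Un_cv (fun k => / 3 ^ k) 0.
Proof.
  intros eps Heps.
  destruct (pow_lt_1_zero (/ 3)) with (y := eps) as [N HN];
    [rewrite Rabs_pos_eq; lra | exact Heps |].
  exists N; intros k Hk; unfold R_dist; rewrite Rminus_0_r, <- pow_inv; exact (HN k Hk).
Qed.

Lemma INR_pow3 k : INR (3 ^ k) = 3 ^ k.
Proof. rewrite pow_INR; replace (INR 3) with 3 by (simpl; lra); reflexivity. Qed.

Lemma INR_length_Wm m : INR (length (Wm m)) = (3 ^ S m - 1) / 2.
Proof.
  pose proof (f_equal INR (length_Wm m)) as H.
  rewrite plus_INR, mult_INR, INR_pow3 in H.
  replace (INR 2) with 2 in H by (simpl; lra); change (INR 1) with 1 in H; lra.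
Qed.

(* With [t = 3^j] and [X = 3^k]: the mismatch ratio of [dseq (3^(j+1))] at index [j+1+k]. *)
Lemma mismatch_ratio_error t X : 1 <= t -> 1 <= X ->
  Rabs (X * (t + 1) / ((9 * t * X - 1) / 2) - (2/9 + 2/(9*t))) <= / X.
Proof.
  intros Ht HX.
  assert (HD : 0 < 9 * t * X - 1) by nra.
  replace (X * (t + 1) / ((9 * t * X - 1) / 2) - (2/9 + 2/(9*t)))
    with (2 * (t + 1) / (9 * t * (9 * t * X - 1))) by (field; lra).
  rewrite Rabs_pos_eq by (apply Rle_mult_inv_pos; nra).
  apply Rge_le, Rminus_ge.
  replace (/ X - 2 * (t + 1) / (9 * t * (9 * t * X - 1)))
    with ((9 * t * (9 * t * X - 1) - 2 * (t + 1) * X) * / (X * (9 * t * (9 * t * X - 1))))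
    by (field; lra).
  apply Rle_ge, Rle_mult_inv_pos; nra.
Qed.

Lemma d0seq_limit j : Un_cv (d0seq (3 ^ S j)) (1/6 + 1 / (2 * 3 ^ S j)).
Proof.
  apply CV_shift with (k := S j), Un_cv_const; intros k.
  pose proof (f_equal INR (zero_one_Wm_shift j k)) as Hz.
  rewrite !mult_INR, plus_INR, !INR_pow3 in Hz.
  replace (INR 2) with 2 in Hz by (simpl; lra); change (INR 1) with 1 in Hz.
  unfold d0seq, dist0; rewrite Nat.add_comm, zeros_Wm, INR_pow3, pow_add.
  set (z := INR (zero_one _ _)) in *.
  assert (0 < 3 ^ j) by (apply pow_lt; lra).
  assert (0 < 3 ^ k) by (apply pow_lt; lra).
  replace z with (3 ^ k * (3 ^ j + 1) / 2) by lra.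
  simpl pow; field; lra.
Qed.

Lemma dseq_limit j : Un_cv (dseq (3 ^ S j)) (2/9 + 2 / 3 ^ (S j + 1)).
Proof.
  apply CV_shift with (k := S j), Un_cv_dominated with (2 := Un_cv_inv_pow3); intros k.
  unfold dseq, Defs.dist; rewrite Nat.add_comm, mismatches_Wm_shift, INR_length_Wm.
  rewrite mult_INR, plus_INR, !INR_pow3; change (INR 1) with 1.
  replace (3 ^ S (S j + k)) with (9 * 3 ^ j * 3 ^ k)
    by (rewrite <- tech_pow_Rmult, pow_add; simpl; ring).
  replace (2 / 3 ^ (S j + 1)) with (2 / (9 * 3 ^ j))
    by (rewrite pow_add; simpl; field; apply pow_nonzero; lra).
  apply mismatch_ratio_error; apply pow_R1_Rle; lra.
Qed.

Theorem proposition2 :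
  (forall n : nat, (0 < n)%nat ->
     let i_n := (2 * length (Wm (n - 1)) + 1)%nat in
     Un_cv (d0seq i_n) (1/6 + 1 / (2 * 3 ^ n)) /\
     Un_cv (dseq i_n) (2/9 + 2 / 3 ^ (n + 1))) /\
  (* the bound 2/9 cannot be improved *)
  (forall eps : R, 0 < eps ->
     exists i : nat, (0 < i)%nat /\
       exists L : R, Un_cv (dseq i) L /\ L < 2/9 + eps).
Proof.
  split.
  - intros [|j] Hn; [lia|]; intros i_n.
    replace i_n with (3 ^ S j)%nat
      by (unfold i_n; rewrite Nat.sub_succ, Nat.sub_0_r; symmetry; apply length_Wm).
    exact (conj (d0seq_limit j) (dseq_limit j)).
  - intros eps Heps.
    destruct (Un_cv_inv_pow3 (eps / 2)) as [N HN]; [lra|].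
    specialize (HN (S N + 1)%nat ltac:(lia)); unfold R_dist in HN.
    rewrite Rminus_0_r, Rabs_pos_eq in HN by (left; apply Rinv_0_lt_compat, pow_lt; lra).
    exists (3 ^ S N)%nat; split; [apply Nat.neq_0_lt_0, Nat.pow_nonzero; lia|].
    exists (2/9 + 2 / 3 ^ (S N + 1)); split; [apply dseq_limit | unfold Rdiv; lra].
Qed.
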